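(* For any metric spaces $(X,d_X)$ and $(Y,d_Y)$, $$\tilde d_{\mathrm{GH}}(X,Y)\le d_{\mathrm{GH}}(X,Y)\le 2\,\tilde d_{\mathrm{GH}}(X,Y).$$
   Context: For (not necessarily continuous) maps $f:X\to Y$, $g:Y\to X$: $\mathrm{dis}(f)=\sup_{x,x'\in X}|d_X(x,x')-d_Y(f(x),f(x'))|$ (similarly $\mathrm{dis}(g)$), $\mathrm{codis}(f,g)=\sup_{x\in X,y\in Y}|d_X(x,g(y))-d_Y(y,f(x))|$, and $\widetilde{\mathrm{codis}}(f,g)=\max\{\sup_{x\in X}d_X(x,g(f(x))),\sup_{y\in Y}d_Y(y,f(g(y)))\}$. The Gromov–Hausdorff distance is $d_{\mathrm{GH}}(X,Y)=\tfrac12\inf_{f,g}\max\{\mathrm{dis}(f),\mathrm{dis}(g),\mathrm{codis}(f,g)\}$, and the altered Gromov–Hausdorff distance is $\tilde d_{\mathrm{GH}}(X,Y)=\tfrac12\inf_{f,g}\max\{\mathrm{dis}(f),\mathrm{dis}(g),\widetilde{\mathrm{codis}}(f,g)\}$, both infima over all maps $f:X\to Y$, $g:Y\to X$. *)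

From mathcomp Require Import all_boot all_order all_algebra.
From mathcomp Require Import all_classical all_reals ereal.
Set Implicit Arguments. Unset Strict Implicit. Unset Printing Implicit Defensive.
Import Order.TTheory GRing.Theory Num.Theory.
Local Open Scope classical_set_scope.
Local Open Scope ring_scope.

Definition is_metric (R : realType) (T : Type) (d : T -> T -> R) : Prop :=
  [/\ (forall x y, 0 <= d x y),
      (forall x y, d x y = 0 <-> x = y),
      (forall x y, d x y = d y x) &
      (forall x y z, d x z <= d x y + d y z)].

Local Open Scope ereal_scope.

(* supremum of a family of nonnegative reals, with sup of the empty family = 0 *)
Definition esup0 (R : realType) (I : Type) (F : I -> R) : \bar R :=
  ereal_sup ([set 0] `|` range (fun i => (F i)%:E)).

Section GH.
Variables (R : realType) (X Y : Type) (dX : X -> X -> R) (dY : Y -> Y -> R).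

Definition dis (f : X -> Y) : \bar R :=
  esup0 (fun p : X * X => `|dX p.1 p.2 - dY (f p.1) (f p.2)|%R).

Definition dis' (g : Y -> X) : \bar R :=
  esup0 (fun p : Y * Y => `|dY p.1 p.2 - dX (g p.1) (g p.2)|%R).

Definition codis (f : X -> Y) (g : Y -> X) : \bar R :=
  esup0 (fun p : X * Y => `|dX p.1 (g p.2) - dY p.2 (f p.1)|%R).

Definition codis_alt (f : X -> Y) (g : Y -> X) : \bar R :=
  maxe (esup0 (fun x : X => dX x (g (f x))))
       (esup0 (fun y : Y => dY y (f (g y)))).

Definition dGH : \bar R :=
  (2^-1)%:E * ereal_inf (range (fun fg : (X -> Y) * (Y -> X) =>
     maxe (dis fg.1) (maxe (dis' fg.2) (codis fg.1 fg.2)))).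

Definition dGH_alt : \bar R :=
  (2^-1)%:E * ereal_inf (range (fun fg : (X -> Y) * (Y -> X) =>
     maxe (dis fg.1) (maxe (dis' fg.2) (codis_alt fg.1 fg.2)))).
End GH.

(* For fixed maps f : X -> Y and g : Y -> X, taking y = f x in the codistortion
   shows that the altered codistortion sup d(x, g f x) \/ sup d(y, f g y) is
   at most codis(f, g).  Conversely, by the triangle inequality through g f x,
   d(x, g y) <= d(x, g f x) + d(f x, y) + dis g, and symmetrically through
   f g y, so codis(f, g) is at most twice the altered cost of (f, g). *)

From mathcomp Require Import all_boot all_order all_algebra.
From mathcomp Require Import all_classical all_reals ereal.
From mathcomp Require Import lra.
Set Implicit Arguments.
Unset Strict Implicit.
Unset Printing Implicit Defensive.
Import Order.TTheory GRing.Theory Num.Theory.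
Local Open Scope classical_set_scope.
Local Open Scope ring_scope.
Local Open Scope ereal_scope.

Section Esup0.
Variables (R : realType) (I : Type) (F : I -> R).

Lemma esup0_ge0 : 0 <= esup0 F.
Proof. by apply: ereal_sup_ubound; left. Qed.

Lemma esup0_ub i : (F i)%:E <= esup0 F.
Proof. by apply: ereal_sup_ubound; right; exists i. Qed.

Lemma esup0_le (c : \bar R) : 0 <= c -> (forall i, (F i)%:E <= c) -> esup0 F <= c.
Proof. by move=> c0 Fc; apply: ge_ereal_sup => _ [->|[i _ <-]]. Qed.

Lemma esup0_le_fin (r : R) : esup0 F <= r%:E -> forall i, (F i <= r)%R.
Proof. by move=> Fr i; rewrite -lee_fin (le_trans (esup0_ub i)). Qed.

End Esup0.

Section EInfRange.
Variables (R : realType) (I : Type) (a b : I -> \bar R).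

Lemma ereal_inf_range_le : (forall i, a i <= b i) ->
  ereal_inf (range a) <= ereal_inf (range b).
Proof.
move=> ab; apply: le_ereal_inf_tmp => _ [i _ <-].
by apply: le_trans (ab i); apply: ereal_inf_lbound; exists i.
Qed.

Lemma ereal_inf_range_le_pZl (c : R) : (0 < c)%R ->
  (forall i, b i <= c%:E * a i) ->
  ereal_inf (range b) <= c%:E * ereal_inf (range a).
Proof.
move=> c0 bca; rewrite -ereal_inf_pZl //.
apply: le_ereal_inf_tmp => _ [_ [i _ <-] <-].
by apply: le_trans (bca i); apply: ereal_inf_lbound; exists i.
Qed.

End EInfRange.

Section CodistortionComparison.
Variables (R : realType) (X Y : Type) (dX : X -> X -> R) (dY : Y -> Y -> R).

Definition gh_cost f g :=
  maxe (dis dX dY f) (maxe (dis' dX dY g) (codis dX dY f g)).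

Definition gh_cost_alt f g :=
  maxe (dis dX dY f) (maxe (dis' dX dY g) (codis_alt dX dY f g)).

Hypotheses (hX : is_metric dX) (hY : is_metric dY).
Variables (f : X -> Y) (g : Y -> X).

Lemma codis_alt_le_codis : codis_alt dX dY f g <= codis dX dY f g.
Proof.
case: hX => dX_ge0 dX_eq0 _ _; case: hY => dY_ge0 dY_eq0 _ _.
rewrite /codis_alt /codis ge_max; apply/andP; split; apply: esup0_le;
  rewrite ?esup0_ge0 //.
- move=> x; apply: le_trans _ (esup0_ub _ (x, f x)) => /=.
  by rewrite (proj2 (dY_eq0 _ _) erefl) subr0 ger0_norm ?dX_ge0.
- move=> y; apply: le_trans _ (esup0_ub _ (g y, y)) => /=.
  by rewrite (proj2 (dX_eq0 _ _) erefl) sub0r normrN ger0_norm ?dY_ge0.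
Qed.

Lemma codis_term_le (r : R) :
  (forall x x', `|dX x x' - dY (f x) (f x')| <= r)%R ->
  (forall y y', `|dY y y' - dX (g y) (g y')| <= r)%R ->
  (forall x, dX x (g (f x)) <= r)%R ->
  (forall y, dY y (f (g y)) <= r)%R ->
  forall x y, (`|dX x (g y) - dY y (f x)| <= 2 * r)%R.
Proof.
case: hX => _ _ dX_sym dX_tri; case: hY => _ _ dY_sym dY_tri.
move=> dis_f dis_g gf fg x y.
have /andP[f_lip _] : (- r <= dX (g y) x - dY (f (g y)) (f x) <= r)%R.
  by rewrite -ler_norml dis_f.
have /andP[g_lip _] : (- r <= dY (f x) y - dX (g (f x)) (g y) <= r)%R.
  by rewrite -ler_norml dis_g.
have := dX_tri x (g (f x)) (g y); have := dY_tri y (f (g y)) (f x).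
have := gf x; have := fg y; have := dX_sym (g y) x; have := dY_sym (f x) y.
rewrite ler_norml; move=> *; apply/andP; split; lra.
Qed.

Lemma gh_cost_alt_le : gh_cost_alt f g <= gh_cost f g.
Proof. by rewrite le_max2 // le_max2 // codis_alt_le_codis. Qed.

Lemma gh_cost_le_2 (r : R) : gh_cost_alt f g <= r%:E -> gh_cost f g <= (2 * r)%:E.
Proof.
rewrite /gh_cost_alt /gh_cost !ge_max => /and4P[dis_f_r dis_g_r gf_r fg_r].
have r_ge0 : (0 <= r)%R by rewrite -lee_fin (le_trans (esup0_ge0 _) dis_f_r).
have r_le2r : r%:E <= (2 * r)%:E by rewrite lee_fin ler_peMl // ler1n.
rewrite (le_trans dis_f_r) // (le_trans dis_g_r) //=.
move: dis_f_r dis_g_r gf_r fg_r.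
move=> /esup0_le_fin dis_f /esup0_le_fin dis_g /esup0_le_fin gf /esup0_le_fin fg.
apply: esup0_le => [|[x y]]; first by rewrite lee_fin mulr_ge0.
rewrite lee_fin; apply: codis_term_le => [x1 x2|y1 y2|//|//].
- exact: (dis_f (x1, x2)).
- exact: (dis_g (y1, y2)).
Qed.

Lemma gh_cost_le_2_alt : gh_cost f g <= 2%:E * gh_cost_alt f g.
Proof.
have : 0 <= gh_cost_alt f g by rewrite le_max esup0_ge0.
case: (gh_cost_alt f g) (@gh_cost_le_2) => [r le2 _ | _ _ | //].
- by rewrite -EFinM le2.
- by rewrite mulry gtr0_sg ?mul1e ?leey.
Qed.

End CodistortionComparison.

Theorem proposition5p10 (R : realType) (X Y : Type)
  (dX : X -> X -> R) (dY : Y -> Y -> R)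
  (hX : is_metric dX) (hY : is_metric dY) :
  dGH_alt dX dY <= dGH dX dY /\ dGH dX dY <= 2%:E * dGH_alt dX dY.
Proof.
have half_ge0 : 0 <= (2^-1 : R)%:E by rewrite lee_fin invr_ge0.
split; rewrite /dGH /dGH_alt.
- apply: lee_wpmul2l => //; apply: ereal_inf_range_le => -[f g].
  exact: (gh_cost_alt_le hX hY).
- rewrite muleCA; apply: lee_wpmul2l => //.
  apply: ereal_inf_range_le_pZl => // -[f g].
  exact: (gh_cost_le_2_alt hX hY).
Qed.
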